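(* Consider ballistic deposition started from the empty configuration. There is a constant $\kappa>0$ such that for all $N$, all integers $H>2$ and every site $i\in G_N$, $$P\big(\sigma_i(N)>H\big)\le e^{-\kappa H}.$$
   Context: Ballistic deposition: for $N\ge2$, $G_N=\{1,\dots,N\}$, a configuration $\sigma\in\mathbb N^N$ gives column heights. Given $\sigma$, an explorer is a walk $(X_n,Z_n)_{n\ge0}$ with $(X_n)$ i.i.d. uniform on $G_N$, $Z_0=\max_i\sigma_i+1$ and $Z_{n+1}=Z_n-1$. With $n^*=\inf\{n:Z_n\le\sigma_{X_n}\}$, the configuration becomes $\sigma+e_{X_{n^*}}$. Explorers are sent successively and independently; $\sigma(t)$ is the configuration after $t$ explorers, $\sigma(0)=(0,\dots,0)$. *)

From Stdlib Require Import Reals.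
From mathcomp Require Import all_boot.
Set Implicit Arguments. Unset Strict Implicit. Unset Printing Implicit Defensive.

(* Configurations on G_N = 'I_N (site k of the paper is index k-1). *)
Definition config (N : nat) := {ffun 'I_N -> nat}.

(* Explorer landing: Z_n = z, X_n = X n; stop at the first n with Z_n <= sigma_{X_n}.
   Started with z = max sigma + 1, it stops at the latest when z = 0, i.e. within
   max sigma + 2 steps, so the fuel max sigma + 2 is never exhausted. *)
Fixpoint land (N : nat) (s : config N) (X : nat -> 'I_N) (z n fuel : nat) : 'I_N :=
  match fuel with
  | 0 => X n
  | f.+1 => if z <= s (X n) then X n else land s X z.-1 n.+1 f
  end.

Definition maxh (N : nat) (s : config N) : nat := \max_(j : 'I_N) s j.

Definition deposit (N : nat) (s : config N) (X : nat -> 'I_N) : config N :=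
  let x := land s X (maxh s).+1 0 (maxh s).+2 in
  [ffun j => s j + (j == x)].

(* Randomness: w (t, n) is the position X_n of the (t+1)-th explorer.
   Before the (t+1)-th explorer (t < N) the max height is <= t, so it uses
   at most t+2 <= N+1 draws; all draws used within the first N explorers are thus
   i.i.d. uniform coordinates of a uniform w (unused coordinates are irrelevant). *)
Definition draws (N : nat) := {ffun 'I_N.+1 * 'I_N.+1 -> 'I_N}.

Fixpoint sigma_t (N : nat) (w : draws N) (t : nat) : config N :=
  match t with
  | 0 => [ffun => 0]
  | t'.+1 => deposit (sigma_t w t') (fun n => w (inord t', inord n))
  end.

Definition prob_exceeds (N H : nat) (i : 'I_N) : R :=
  Rdiv (INR #|[set w : draws N | H < sigma_t w N i]|) (INR #|{: draws N}|).

From Stdlib Require Import Reals.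
From mathcomp Require Import all_boot all_order all_algebra zify ring lra Rstruct.
Import Order.TTheory GRing.Theory Num.Theory.
Set Implicit Arguments. Unset Strict Implicit. Unset Printing Implicit Defensive.

(* The potential [base N t ^+ (sigma_i(t) + 1)], where [base N t] decreases
   from at most 3/2 at t = 0 to 12/11 at t = N, is a supermartingale for t <= N: an
   explorer can only stop on column i during the last sigma_i + 1 steps of its descent, so
   it lands there with probability at most (sigma_i + 1) / N, and the decrease of
   [base N t] absorbs this drift. Conditional expectations given the first t explorers are
   averages over the row of draws of the (t+1)-th explorer ([set_row]). Markov's inequality
   then gives P(sigma_i(N) > H) <= 3/2 * (12/11)^-(H+2), which is at most (201/200)^-H
   once H > 2. *)

Lemma card_ffun_eq_at (I T : finType) (j : I) (v : T) :
  #|T| * #|[set f : {ffun I -> T} | f j == v]| = #|{: {ffun I -> T}}|.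
Proof.
pose F x := if x == j then pred1 v else predT.
have -> : #|[set f : {ffun I -> T} | f j == v]| = #|family F|.
  apply: eq_card => f; rewrite inE; apply/eqP/familyP => [fj x | /(_ j)].
    by rewrite /F; case: eqP => [->|_]; rewrite ?fj inE.
  by rewrite /F eqxx inE => /eqP.
rewrite card_family card_ffun foldrE big_image (bigD1 j) //= /F eqxx card1 mul1n.
rewrite (eq_bigr (fun _ => #|T|)) => [|x /negbTE ->] //.
by rewrite prod_nat_const cardC1 -expnS prednK //; apply/card_gt0P; exists j.
Qed.

Section Landing.
Variables (N : nat) (s : config N).

Lemma land_spec (X : nat -> 'I_N) fuel z n : z < fuel ->
  exists m, [/\ n <= m <= n + z, z - (m - n) <= s (X m) & land s X z n fuel = X m].
Proof.
elim: fuel z n => [|fuel IH] z n // z_lt /=.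
case: ifP => [stop | /negbT]; first by exists n; rewrite subnn subn0 leqnn leq_addr.
rewrite -ltnNge => /(leq_ltn_trans (leq0n _)) z_gt0.
have [m [/andP[n_lt m_le] hm ->]] := IH z.-1 n.+1 ltac:(lia).
by exists m; split => //; [apply/andP; split | move: hm]; lia.
Qed.

Lemma eq_land (X Y : nat -> 'I_N) fuel z n :
  X =1 Y -> land s X z n fuel = land s Y z n fuel.
Proof. by move=> eqXY; elim: fuel z n => [|fuel IH] z n //=; rewrite eqXY IH. Qed.

Lemma eq_deposit (X Y : nat -> 'I_N) : X =1 Y -> deposit s X = deposit s Y.
Proof. by move=> eqXY; rewrite /deposit (eq_land _ _ _ eqXY). Qed.

Definition row := {ffun 'I_N.+1 -> 'I_N}.

Definition landing (r : row) : 'I_N :=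
  land s (fun n => r (inord n)) (maxh s).+1 0 (maxh s).+2.

Lemma depositE (r : row) j : deposit s (fun n => r (inord n)) j = s j + (landing r == j).
Proof. by rewrite ffunE eq_sym. Qed.

Lemma card_landing_le (i : 'I_N) :
  N * #|[set r : row | landing r == i]| <= (s i).+1 * #|{: row}|.
Proof.
set M := maxh s; set a := M.+1 - s i.
have si_le : s i <= M by apply: leq_bigmax.
have cover : #|[set r : row | landing r == i]| <=
             \sum_(k < (s i).+1) #|[set r : row | r (inord (a + k)) == i]|.
  under [X in _ <= X]eq_bigr do rewrite -sum1dep_card big_mkcond.
  rewrite -sum1dep_card exchange_big big_mkcond /=; apply: leq_sum => r _.
  case: eqP => //= land_i.
  have [m [/andP[_ m_le] hm land_m]] :=
    @land_spec (fun n => r (inord n)) M.+2 M.+1 0 (ltnSn _).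
  have r_m : r (inord m) = i by rewrite -land_i /landing -/M land_m.
  rewrite r_m in hm.
  have k_lt : m - a < (s i).+1 by rewrite /a; lia.
  rewrite (bigD1 (Ordinal k_lt)) //= (_ : a + (m - a) = m) ?r_m ?eqxx //; rewrite /a; lia.
rewrite (leq_trans (leq_mul (leqnn N) cover)) // big_distrr /=.
under eq_bigr do rewrite -{1}(card_ord N) card_ffun_eq_at.
by rewrite sum_nat_const card_ord.
Qed.

End Landing.

Section Resampling.
Variables (N t : nat).

Definition set_row (w : draws N) (r : row N) : draws N :=
  [ffun p => if p.1 == inord t then r p.2 else w p].

Definition row_of (w : draws N) : row N := [ffun j => w (inord t, j)].

Lemma set_row_of w r : set_row (set_row w r) (row_of w) = w.
Proof. by apply/ffunP => -[u j]; rewrite !ffunE /=; case: eqP => // ->. Qed.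

Lemma row_of_set w r : row_of (set_row w r) = r.
Proof. by apply/ffunP => j; rewrite !ffunE /= eqxx. Qed.

Lemma sum_set_row (V : nmodType) (F : draws N -> V) :
  (\sum_w \sum_r F (set_row w r) = (\sum_w F w) *+ #|{: row N}|)%R.
Proof.
pose swap (p : draws N * row N) := (set_row p.1 p.2, row_of p.1).
have swapK : involutive swap by case=> w r; rewrite /swap /= set_row_of row_of_set.
rewrite pair_big (reindex_inj (inv_inj swapK)) /=.
under eq_bigr do rewrite set_row_of.
rewrite -(pair_big predT predT (fun w _ => F w)) -sumrMnl.
by apply: eq_bigr => w _; rewrite sumr_const.
Qed.

Lemma sigma_t_eq (w1 w2 : draws N) :
  (forall u n, u < t -> w1 (inord u, n) = w2 (inord u, n)) ->
  sigma_t w1 t = sigma_t w2 t.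
Proof.
elim: t => [//|u IH] eq_w /=.
rewrite IH => [|v n v_lt]; last by apply: eq_w; apply: ltnW.
by apply: eq_deposit => n; apply: eq_w.
Qed.

Hypothesis t_le : t <= N.

Lemma sigma_t_set_row w r : sigma_t (set_row w r) t = sigma_t w t.
Proof.
apply: sigma_t_eq => u n u_lt; rewrite ffunE /=.
by case: eqP => // /(congr1 val) /=; rewrite !inordK; lia.
Qed.

Lemma sigma_t_set_row_succ w r :
  sigma_t (set_row w r) t.+1 = deposit (sigma_t w t) (fun n => r (inord n)).
Proof. by rewrite /= sigma_t_set_row; apply: eq_deposit => n; rewrite ffunE /= eqxx. Qed.

End Resampling.

Local Open Scope ring_scope.

Lemma exprS_ge_tangent (R : realDomainType) (a b : R) n : 0 <= b <= a ->
  b ^+ n.+1 + n.+1%:R * b ^+ n * (a - b) <= a ^+ n.+1.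
Proof.
case/andP=> b_ge0 b_le_a; rewrite addrC -lerBrDr subrXX mulrC /=.
apply: ler_wpM2l; first by rewrite subr_ge0.
apply: le_trans (_ : \sum_(i < n.+1) b ^+ n <= _).
  by rewrite sumr_const card_ord mulr_natl.
apply: ler_sum => i _.
have i_le : (i <= n)%N by rewrite -ltnS.
rewrite -{1}(subnK i_le) exprD ler_wpM2r ?exprn_ge0 //.
by rewrite lerXn2r ?nnegrE // (le_trans b_ge0).
Qed.

Definition delta := (11%:R : R)^-1.
Definition growth (N : nat) := 1 + (3%:R : R) / 2%:R / N%:R.
Definition base (N t : nat) := 1 + delta * growth N ^+ (N - t).
Definition potential (N t y : nat) := base N t ^+ y.+1.

Lemma exp_gt0 x : 0 < exp x.
Proof. by apply/RltP; rewrite -R0E; apply: exp_pos. Qed.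

Lemma exp_three_halves_le : exp (3%:R / 2%:R) <= 11%:R / 2%:R.
Proof.
have e_le3 : exp 1 <= 3%:R by have /RleP := exp_le_3; rewrite !RealsE.
have sq : exp (3%:R / 2%:R) ^+ 2 = exp 1 ^+ 3.
  by rewrite expr2 expRD !exprS expr0 mulr1 !expRD; congr exp; rewrite !RealsE /=; lra.
have : exp 1 ^+ 3 <= 3%:R ^+ 3 by rewrite lerXn2r ?nnegrE ?ler0n // ltW ?exp_gt0.
by have := exp_gt0 (3%:R / 2%:R); rewrite -sq; nra.
Qed.

Lemma growth_ge1 N : 1 <= growth N.
Proof. by rewrite lerDl !divr_ge0 ?ler0n. Qed.

Lemma growth_expn_le N : (0 < N)%N -> growth N ^+ N <= 11%:R / 2%:R.
Proof.
move=> N_gt0; apply: le_trans exp_three_halves_le.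
pose x := (3%:R : R) / 2%:R / N%:R.
have growth_le : growth N <= exp x by have /RleP := exp_ineq1_le x.
apply: le_trans (_ : exp x ^+ N <= _).
  by rewrite lerXn2r ?nnegrE ?(le_trans ler01 (growth_ge1 N)) // ltW ?exp_gt0.
rewrite expRX /x -[_ *+ N]mulr_natr divfK ?pnatr_eq0 -?lt0n //.
Qed.

Lemma delta_growth_le N m : (0 < N)%N -> (m <= N)%N -> delta * growth N ^+ m <= 2%:R^-1.
Proof.
move=> N_gt0 m_le; have := growth_expn_le N_gt0.
have : growth N ^+ m <= growth N ^+ N by rewrite ler_weXn2l ?growth_ge1.
by rewrite /delta; lra.
Qed.

Lemma base_ge1 N t : 1 <= base N t.
Proof.
by rewrite lerDl mulr_ge0 ?exprn_ge0 ?(le_trans ler01 (growth_ge1 N)) ?invr_ge0 ?ler0n.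
Qed.

(* With [d := delta * growth N ^+ (N - t.+1)] this reads [(1 + d) * d / N <= 3/2 * d / N],
   i.e. [d <= 1/2]: this is what fixes the constants [3/2] in [growth] and [1/11] in
   [delta] (via [growth N ^+ N <= exp (3/2) <= 11/2]). *)
Lemma base_step N t : (t < N)%N ->
  base N t.+1 + base N t.+1 * (base N t.+1 - 1) / N%:R <= base N t.
Proof.
move=> t_lt; have N_gt0 : (0 < N)%N by apply: leq_ltn_trans t_lt.
rewrite /base (_ : (N - t = (N - t.+1).+1)%N); last by rewrite subnSK.
set d := delta * growth N ^+ (N - t.+1).
have d_le : d <= 2%:R^-1 by apply: delta_growth_le; rewrite ?leq_subr.
have d_ge0 : 0 <= d.
  by rewrite mulr_ge0 ?exprn_ge0 ?(le_trans ler01 (growth_ge1 N)) ?invr_ge0 ?ler0n.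
have -> : delta * growth N ^+ (N - t.+1).+1 = d + d * (3%:R / 2%:R) / N%:R.
  by rewrite exprS /d /growth; field; rewrite pnatr_eq0 -lt0n.
set u := (N%:R : R)^-1.
have u_ge0 : 0 <= u by rewrite invr_ge0 ler0n.
have : 0 <= d * u * (2%:R^-1 - d) by apply: mulr_ge0; [apply: mulr_ge0 | lra].
nra.
Qed.

Lemma potential_drift N t y (p : R) : (t < N)%N -> 0 <= p -> p * N%:R <= y.+1%:R ->
  potential N t.+1 y + p * (potential N t.+1 y.+1 - potential N t.+1 y) <= potential N t y.
Proof.
move=> t_lt p_ge0 pN_le; have N_gt0 : (0 < N)%N by apply: leq_ltn_trans t_lt.
have := base_step t_lt; have := base_ge1 N t.+1; rewrite /potential.
set c' := base N t.+1; set c := base N t => c'_ge1 step.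
have D_ge0 : 0 <= c' * (c' - 1) by apply: mulr_ge0; lra.
have D_le : c' * (c' - 1) / N%:R <= c - c' by lra.
have pD_le : p * (c' * (c' - 1)) <= y.+1%:R * (c - c').
  have -> : p * (c' * (c' - 1)) = p * N%:R * (c' * (c' - 1) / N%:R).
    by field; rewrite pnatr_eq0 -lt0n.
  apply: le_trans (_ : y.+1%:R * (c' * (c' - 1) / N%:R) <= _).
    by apply: ler_wpM2r pN_le; apply: divr_ge0; rewrite ?ler0n.
  by apply: ler_wpM2l; rewrite ?ler0n.
have c'_le : c' <= c by have := divr_ge0 D_ge0 (ler0n _ N); lra.
have c'_bounds : 0 <= c' <= c by apply/andP; split; lra.
have tangent := exprS_ge_tangent y c'_bounds.
have cy_ge0 : 0 <= c' ^+ y by apply: exprn_ge0; lra.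
have := ler_wpM2l cy_ge0 pD_le.
rewrite [c' ^+ y.+2]exprS [c' ^+ y.+1]exprS in tangent *.
lra.
Qed.

Lemma potential_step N t (s : config N) (i : 'I_N) : (t < N)%N ->
  \sum_(r : row N) potential N t.+1 (deposit s (fun n => r (inord n)) i)
    <= #|{: row N}|%:R * potential N t (s i).
Proof.
move=> t_lt; set W := potential N t.+1; set y := s i.
set k := #|[set r : row N | landing s r == i]|; set m := #|{: row N}|.
have m_gt0 : (0 < m)%N by rewrite /m card_ffun card_ord expn_gt0 (leq_ltn_trans _ t_lt).
have -> : \sum_(r : row N) W (deposit s (fun n => r (inord n)) i) =
          m%:R * (W y + k%:R / m%:R * (W y.+1 - W y)).
  rewrite mulrDr mulrA mulrCA divff ?pnatr_eq0 -?lt0n // mulr1.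
  rewrite (eq_bigr (fun r => W y + (landing s r == i)%:R * (W y.+1 - W y))) => [|r _].
    rewrite big_split /= sumr_const mulr_natl -mulr_suml -natr_sum /k -sum1dep_card.
    by congr (_ + _%:R * _); rewrite [RHS]big_mkcond; apply: eq_bigr => r _; case: eqP.
  rewrite depositE; case: eqP => _; rewrite ?addn1 ?addn0 ?mul1r ?mul0r ?addr0 //.
  by rewrite addrC subrK.
apply: ler_wpM2l; first by rewrite ler0n.
apply: potential_drift => //; first by rewrite divr_ge0 ?ler0n.
by rewrite mulrAC ler_pdivrMr ?ltr0n // -!natrM ler_nat mulnC card_landing_le.
Qed.

Definition potential_sum N (i : 'I_N) t :=
  \sum_(w : draws N) potential N t (sigma_t w t i).

Lemma potential_sum_succ_le N (i : 'I_N) t : (t < N)%N ->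
  potential_sum i t.+1 <= potential_sum i t.
Proof.
move=> t_lt; have m_gt0 : 0 < #|{: row N}|%:R :> R.
  by rewrite ltr0n card_ffun card_ord expn_gt0 (leq_ltn_trans _ t_lt).
rewrite -(ler_pM2l m_gt0) mulr_natl -(sum_set_row t) mulr_sumr.
apply: ler_sum => w _.
under eq_bigr do rewrite (sigma_t_set_row_succ (ltnW t_lt)).
exact: potential_step.
Qed.

Lemma potential_sum_le N (i : 'I_N) : potential_sum i N <= #|{: draws N}|%:R * base N 0.
Proof.
have : forall t, (t <= N)%N -> potential_sum i t <= potential_sum i 0.
  elim=> [//|t IH] t_lt.
  exact: le_trans (potential_sum_succ_le i t_lt) (IH (ltnW t_lt)).
move=> /(_ N (leqnn N)) /le_trans; apply.
rewrite /potential_sum (eq_bigr (fun=> base N 0)) => [|w _].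
  by rewrite sumr_const mulr_natl.
by rewrite /potential ffunE expr1.
Qed.

Lemma card_exceeds_le N (i : 'I_N) H :
  #|[set w : draws N | (H < sigma_t w N i)%N]|%:R * (1 + delta) ^+ H.+2
    <= potential_sum i N.
Proof.
set A := [set w | _].
rewrite mulr_natl -sumr_const /potential_sum [leRHS](bigID (mem A)) /=.
rewrite -[leLHS]addr0 lerD //; last first.
  by apply: sumr_ge0 => w _; apply: exprn_ge0; apply: le_trans (base_ge1 N N).
apply: ler_sum => w; rewrite inE => exceeds.
by rewrite /potential /base subnn expr0 mulr1 ler_weXn2l // lerDl /delta invr_ge0 ler0n.
Qed.

Definition decay_rate := (201%:R : R) / 200%:R.

Lemma three_halves_pow_le H : (2 < H)%N ->
  3%:R / 2%:R * decay_rate ^+ H <= (1 + delta) ^+ H.+2 :> R.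
Proof.
move=> /subnK <-; elim: (H - 3)%N => [|k IH].
  by rewrite /delta /decay_rate !exprS !expr0; lra.
rewrite addSn [X in _ <= X]exprS exprS mulrCA.
apply: le_trans (ler_wpM2l _ IH) _; first by rewrite /decay_rate; lra.
by apply: ler_wpM2r; [apply: exprn_ge0 |]; rewrite /delta /decay_rate; lra.
Qed.

Lemma prob_exceeds_le N H (i : 'I_N) : (2 < H)%N ->
  prob_exceeds H i <= (decay_rate ^+ H)^-1.
Proof.
move=> H_gt2; have N_gt0 : (0 < N)%N by apply: leq_ltn_trans (ltn_ord i).
rewrite /prob_exceeds !RealsE.
set a := #|[set w | _]|%:R; set d := #|{: draws N}|%:R.
have d_gt0 : 0 < d by rewrite /d ltr0n card_ffun card_ord expn_gt0 N_gt0.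
have rate_gt0 : 0 < decay_rate ^+ H by rewrite exprn_gt0 /decay_rate //; lra.
have base0 : base N 0 <= 3%:R / 2%:R.
  by have := delta_growth_le N_gt0 (leqnn N); rewrite /base subn0; lra.
have markov := le_trans (card_exceeds_le i H) (potential_sum_le i).
have tail := three_halves_pow_le H_gt2.
have a_ge0 : 0 <= a by rewrite ler0n.
have : a * (1 + delta) ^+ H.+2 <= d * (3%:R / 2%:R).
  by apply: le_trans markov _; rewrite ler_wpM2l // ltW.
rewrite ler_pdivrMr // ler_pdivlMl //.
have := ler_wpM2l a_ge0 tail; nra.
Qed.

Local Close Scope ring_scope.

Theorem proposition6p1 :
  exists kappa : R, Rlt 0 kappa /\
    forall N : nat, 2 <= N -> forall H : nat, 2 < H -> forall i : 'I_N,
      Rle (@prob_exceeds N H i) (exp (Ropp (Rmult kappa (INR H)))).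
Proof.
have rate_gt1 : Rlt 1 decay_rate by apply/RltP; rewrite R1E /decay_rate; lra.
exists (ln decay_rate); split.
  by rewrite -ln_1; apply: ln_increasing => //; apply: Rlt_0_1.
move=> N _ H H_gt2 i.
rewrite exp_Ropp Rmult_comm -/(Rpower decay_rate (INR H)) Rpower_pow.
  by apply/RleP; rewrite !RealsE; apply: prob_exceeds_le.
exact: Rlt_trans Rlt_0_1 rate_gt1.
Qed.
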